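(* Let $n \geqslant 2$ and let $p \geqslant 2$ be an integer. For any $\varepsilon_1, \varepsilon_2 \in [0,1]$ with $\varepsilon_1 > \varepsilon_2$, we have $\mathcal X(\varepsilon_1, p) \subset \mathcal X(\varepsilon_2, p)$ (proper inclusion).
   Context: For $\bm x \in \mathbb{R}^n_{\geqslant 0}$ and $p \geqslant 1$, $\|\bm x\|_p = (\sum_{i=1}^n x_i^p)^{1/p}$. Define $D_p = n^{1-1/p} - 1$. For an integer $p\geqslant 2$ and $\varepsilon \in [0,1]$, define $\mathcal X(\varepsilon,p) = \{\bm x \in \mathbb{R}^n_{\geqslant 0} : (1+\varepsilon D_p)\|\bm x\|_p \leqslant \|\bm x\|_1\}$ (the set of ''at least $(\varepsilon,p)$-fair'' vectors). *)

From mathcomp Require Import all_boot all_order all_algebra.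
From mathcomp Require Import all_classical all_reals all_analysis.
Set Implicit Arguments. Unset Strict Implicit. Unset Printing Implicit Defensive.
Import Order.TTheory GRing.Theory Num.Theory.
Local Open Scope ring_scope.

Definition nonneg_vec (R : realType) (n : nat) (x : 'I_n -> R) : Prop :=
  forall i, 0 <= x i.

Definition pnorm (R : realType) (n : nat) (p : R) (x : 'I_n -> R) : R :=
  powR (\sum_(i < n) powR (x i) p) p^-1.

Definition Dp (R : realType) (n : nat) (p : R) : R :=
  powR (n%:R) (1 - p^-1) - 1.

Definition fairset (R : realType) (n : nat) (eps p : R) : set ('I_n -> R) :=
  [set x | nonneg_vec x /\ (1 + eps * Dp n p) * pnorm p x <= pnorm 1 x].

From mathcomp Require Import all_boot all_order all_algebra.
From mathcomp Require Import all_classical all_reals all_analysis.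
Set Implicit Arguments. Unset Strict Implicit. Unset Printing Implicit Defensive.
Import Order.TTheory GRing.Theory Num.Theory.
Local Open Scope ring_scope.
Local Open Scope classical_set_scope.

(* Since D_p > 0, the defining inequality of X(eps, p) gets weaker as eps
   decreases, which gives the inclusion.  For strictness, every ratio
   c = ||x||_1 / ||x||_p in [1, n^(1-1/p)] is attained, by the intermediate
   value theorem along the vectors (1, t, ..., t), t in [0, 1]; the vector
   attaining c = 1 + eps2 D_p lies in X(eps2, p) but not in X(eps1, p). *)

Section Fairness.
Variable R : realType.

Lemma powR_exprnV (p : nat) (a : R) : (0 < p)%N -> 0 <= a ->
  (a ^+ p) `^ p%:R^-1 = a.
Proof.
move=> p_gt0 a_ge0; rewrite -powR_mulrn // -powRrM mulfV ?powRr1 //.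
by rewrite pnatr_eq0 -lt0n.
Qed.

Lemma pnorm1 (n : nat) (x : 'I_n -> R) : nonneg_vec x ->
  pnorm 1 x = \sum_(i < n) x i.
Proof.
move=> x_ge0; rewrite /pnorm invr1 powRr1; last first.
  by apply: sumr_ge0 => i _; rewrite powR_ge0.
by apply: eq_bigr => i _; rewrite powRr1.
Qed.

Lemma Dp_gt0 (n : nat) (p : R) : (1 < n)%N -> 1 < p -> 0 < Dp n p.
Proof.
move=> n_gt1 p_gt1; rewrite /Dp subr_gt0.
have r_gt0 : 0 < 1 - p^-1 by rewrite subr_gt0 invf_lt1 // (lt_trans ltr01).
have := @gt0_ltr_powR R _ r_gt0 1 n%:R.
by rewrite powR1; apply; rewrite ?qualifE /= ?ler0n ?ltr1n.
Qed.

Lemma fairset_antitone (n : nat) (p eps1 eps2 : R) :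
  0 <= Dp n p -> eps2 <= eps1 -> @fairset R n eps1 p `<=` fairset eps2 p.
Proof.
move=> D_ge0 le_eps x [x_ge0 fair1]; split => //; apply: le_trans fair1.
by rewrite ler_wpM2r ?powR_ge0 // lerD2l ler_wpM2r.
Qed.

Lemma exprn_le_powR (p : nat) (N c : R) : (0 < p)%N -> 0 <= N -> 0 <= c ->
  c <= N `^ (1 - p%:R^-1) -> c ^+ p * N <= N ^+ p.
Proof.
move=> p_gt0 N_ge0 c_ge0 c_le; rewrite -!powR_mulrn //.
have p_neq0 : p%:R != 0 :> R by rewrite pnatr_eq0 -lt0n.
have -> : N `^ p%:R = (N `^ (1 - p%:R^-1)) `^ p%:R * N.
  rewrite -powRrM mulrBl mul1r mulVf // -[X in _ * X](powRr1 N_ge0).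
  by rewrite -powRD ?subrK // (negPf p_neq0).
by rewrite ler_wpM2r // ge0_ler_powR ?qualifE /= ?ler0n ?powR_ge0.
Qed.

Section LeadVector.
Variable n : nat.

Definition lead_vec (t : R) : 'I_n.+1 -> R :=
  fun i => if i == ord0 then 1 else t.

Lemma lead_vec_ge0 t : 0 <= t -> nonneg_vec (lead_vec t).
Proof. by move=> t_ge0 i; rewrite /lead_vec; case: ifP. Qed.

Lemma sum_lead_vec (F : R -> R) t :
  \sum_(i < n.+1) F (lead_vec t i) = F 1 + F t *+ n.
Proof.
rewrite big_ord_recl /lead_vec eqxx (eq_bigr (fun=> F t)) //.
by rewrite sumr_const card_ord.
Qed.

Lemma pnorm_lead_vec (p : nat) t : 0 <= t ->
  pnorm p%:R (lead_vec t) = (1 + t ^+ p *+ n) `^ p%:R^-1.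
Proof.
move=> t_ge0; rewrite /pnorm (eq_bigr (fun i => lead_vec t i ^+ p)).
  by rewrite (sum_lead_vec (fun s => s ^+ p)) expr1n.
by move=> i _; rewrite powR_mulrn // lead_vec_ge0.
Qed.

Lemma pnorm1_lead_vec t : 0 <= t -> pnorm 1 (lead_vec t) = 1 + t *+ n.
Proof.
by move=> t_ge0; rewrite pnorm1; [exact: (sum_lead_vec id) | exact: lead_vec_ge0].
Qed.

Lemma lead_vec_root (p : nat) (c : R) : (0 < p)%N ->
  1 <= c <= n.+1%:R `^ (1 - p%:R^-1) ->
  exists2 t, 0 <= t & (1 + t *+ n) ^+ p = c ^+ p * (1 + t ^+ p *+ n).
Proof.
move=> p_gt0 /andP[c_ge1 c_le].
pose P : {poly R} := (1 + 'X *+ n) ^+ p - c ^+ p *: (1 + 'X ^+ p *+ n).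
have P_eval s : P.[s] = (1 + s *+ n) ^+ p - c ^+ p * (1 + s ^+ p *+ n).
  by rewrite /P !(hornerE, hornerMn, hornerXn).
have P0_le0 : P.[0] <= 0.
  rewrite P_eval expr0n /= (gtn_eqF p_gt0) mul0rn !addr0 mulr1 expr1n.
  by rewrite subr_le0 exprn_ege1.
have P1_ge0 : 0 <= P.[1].
  rewrite P_eval expr1n !nat1r subr_ge0 exprn_le_powR ?ler0n //.
  exact: le_trans c_ge1.
have [t t01 Pt0] : exists2 t, t \in `[0, 1]%R & P.[t] = 0.
  apply: (@IVT R (horner P) 0 1 0) => //.
    by apply: derivable_within_continuous => s _; exact: derivable_horner.
  by rewrite ge_min le_max P0_le0 P1_ge0 orbT.
exists t; first by move: t01; rewrite in_itv /= => /andP[].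
by apply/eqP; rewrite -subr_eq0 -P_eval Pt0.
Qed.

Lemma pnorm_ratio_attained (p : nat) (c : R) : (0 < p)%N ->
  1 <= c <= n.+1%:R `^ (1 - p%:R^-1) ->
  exists x : 'I_n.+1 -> R,
    [/\ nonneg_vec x, 0 < pnorm p%:R x & pnorm 1 x = c * pnorm p%:R x].
Proof.
move=> p_gt0 c_range; have [t t_ge0 root_t] := lead_vec_root p_gt0 c_range.
have c_ge0 : 0 <= c by case/andP: c_range => /(le_trans ler01).
have Q_gt0 : 0 < 1 + t ^+ p *+ n by rewrite ltr_wpDr ?mulrn_wge0 ?exprn_ge0.
exists (lead_vec t); split; first exact: lead_vec_ge0.
  by rewrite pnorm_lead_vec // powR_gt0.
rewrite pnorm1_lead_vec // pnorm_lead_vec //.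
rewrite -(powR_exprnV p_gt0 (_ : 0 <= 1 + t *+ n)); last first.
  by rewrite addr_ge0 ?mulrn_wge0.
by rewrite root_t powRM ?exprn_ge0 ?(ltW Q_gt0) // powR_exprnV.
Qed.

End LeadVector.

End Fairness.

Theorem proposition1 (R : realType) (n p : nat) (eps1 eps2 : R) :
  (2 <= n)%N -> (2 <= p)%N ->
  0 <= eps1 <= 1 -> 0 <= eps2 <= 1 -> eps2 < eps1 ->
  @fairset R n eps1 p%:R `<=` @fairset R n eps2 p%:R /\
  @fairset R n eps1 p%:R <> @fairset R n eps2 p%:R.
Proof.
case: n => [|[|m]] // _ p_ge2 /andP[_ eps1_le1] /andP[eps2_ge0 _] lt_eps.
set D := Dp m.+2 (p%:R : R).
have D_gt0 : 0 < D by apply: Dp_gt0; rewrite // ltr1n.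
split; first exact: fairset_antitone (ltW D_gt0) (ltW lt_eps).
set c := 1 + eps2 * D.
have c_range : 1 <= c <= m.+2%:R `^ (1 - p%:R^-1).
  rewrite lerDl mulr_ge0 ?(ltW D_gt0) //=.
  have -> : m.+2%:R `^ (1 - p%:R^-1) = 1 + D by rewrite /D /Dp [RHS]addrC subrK.
  by rewrite lerD2l ler_piMl ?(ltW D_gt0) // (le_trans (ltW lt_eps)).
have [x [x_ge0 pn_gt0 ratio]] := pnorm_ratio_attained (ltnW p_ge2) c_range.
move=> fair_eq; have : fairset eps2 p%:R x by split; rewrite // ratio.
rewrite -fair_eq => -[_]; rewrite ratio ler_pM2r // lerD2l ler_pM2r //.
by rewrite leNgt lt_eps.
Qed.
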